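(* Let $n\ge3$ and let $\mathcal{P}=(V_0,\dots,V_{n-1})$ be an $n$-gon. The following are equivalent: (I) $\mathcal{P}$ is ordinary and locally-strictly convex; (II) $\mathcal{P}$ is quasi-strictly convex; (III) $\mathcal{P}$ is strictly convex.
   Context: A polygon is a finite sequence $\mathcal{P}=(V_0,\dots,V_{n-1})$ of points of $\mathbb{R}^2$, with $V_n:=V_0$, $V_{-1}:=V_{n-1}$, and $i\oplus1:=i+1$ for $i\le n-2$, $(n-1)\oplus1:=0$. $\mathcal{P}$ is convex if $\bigcup_{i=0}^{n-1}\operatorname{conv}\{V_i,V_{i+1}\}=\partial\operatorname{conv}\{V_0,\dots,V_{n-1}\}$. $\mathcal{P}$ is ordinary if $V_i\ne V_j$ for all distinct $i,j\in\{0,\dots,n-1\}$; locally-strict if $V_{i-1},V_i,V_{i+1}$ are non-collinear for every $i\in\{0,\dots,n-1\}$; quasi-strict if for every $i\in\{0,\dots,n-1\}$ and every $j\in\{0,\dots,n-1\}\setminus\{i,i\oplus1\}$ the points $V_i,V_{i\oplus1},V_j$ are non-collinear; strict if $V_i,V_j,V_k$ are non-collinear for any three distinct indices. ''Locally-strictly convex'', ''quasi-strictly convex'', ''strictly convex'' mean the respective property together with convexity. *)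

From HB Require Import structures.
From mathcomp Require Import all_boot all_order all_algebra.
From mathcomp Require Import all_classical all_reals all_analysis.
Set Implicit Arguments. Unset Strict Implicit. Unset Printing Implicit Defensive.
Import Order.TTheory GRing.Theory Num.Theory.
Import numFieldNormedType.Exports.
Local Open Scope ring_scope.
Local Open Scope classical_set_scope.

Notation pt R := (R * R)%type.

Section Polygons.
Variable R : realType.
Local Notation pt := (pt R).

(* a polygon with n vertices: V : 'I_n -> R^2 ; i (+) 1 is [ordS i],
   i - 1 (cyclically) is [ord_pred i]. *)

Definition segment (A B : pt) : set pt :=
  [set x | exists t : R, 0 <= t <= 1 /\
     x = ((1 - t) * A.1 + t * B.1, (1 - t) * A.2 + t * B.2)].

Definition conv_hull n (V : 'I_n -> pt) : set pt :=
  [set x | exists l : 'I_n -> R, (forall i, 0 <= l i) /\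
     \sum_(i < n) l i = 1 /\
     x = (\sum_(i < n) l i * (V i).1, \sum_(i < n) l i * (V i).2)].

Definition boundary (A : set pt) : set pt := closure A `\` interior A.

Definition is_convex n (V : 'I_n -> pt) : Prop :=
  \bigcup_(i in [set: 'I_n]) segment (V i) (V (ordS i)) = boundary (conv_hull V).

Definition collinear (a b c : pt) : Prop :=
  exists p q r : R, (p != 0 \/ q != 0) /\
    p * a.1 + q * a.2 = r /\ p * b.1 + q * b.2 = r /\ p * c.1 + q * c.2 = r.

Definition ordinary n (V : 'I_n -> pt) : Prop :=
  forall i j : 'I_n, i != j -> V i != V j.

Definition locally_strict n (V : 'I_n -> pt) : Prop :=
  forall i : 'I_n, ~ collinear (V (ord_pred i)) (V i) (V (ordS i)).

Definition quasi_strict n (V : 'I_n -> pt) : Prop :=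
  forall i j : 'I_n, j != i -> j != ordS i ->
    ~ collinear (V i) (V (ordS i)) (V j).

Definition strict n (V : 'I_n -> pt) : Prop :=
  forall i j k : 'I_n, i != j -> j != k -> i != k ->
    ~ collinear (V i) (V j) (V k).

End Polygons.

From HB Require Import structures.
From mathcomp Require Import all_boot all_order all_algebra.
From mathcomp Require Import all_classical all_reals all_analysis.
From mathcomp Require Import zify ring lra.

Set Implicit Arguments.
Unset Strict Implicit.
Unset Printing Implicit Defensive.

Import Order.TTheory GRing.Theory Num.Theory.
Import numFieldNormedType.Exports.
Local Open Scope ring_scope.
Local Open Scope classical_set_scope.

(* If three distinct vertices were collinear, one of them, V m, would lie
   strictly between the other two, V a and V b.  Local strictness provides a
   neighbour V c of V m off the line through V a and V b.  The midpoint of the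
   edge from V m to V c is a combination of V a, V b, V c with positive
   weights, hence interior to a nondegenerate triangle contained in the hull;
   but convexity puts every edge on the boundary of the hull.  The remaining
   implications are combinatorial: a repeated vertex or a collinear triple of
   consecutive vertices is a triple forbidden by quasi-strictness. *)

Lemma ordSE n (i : 'I_n) : val (ordS i) = if i.+1 == n then 0%N else i.+1.
Proof.
case: eqP => [/= -> | /eqP Sin]; first by rewrite modnn.
by rewrite /= modn_small // ltn_neqAle Sin ltn_ord.
Qed.

Lemma ordS_neq n (i : 'I_n) : (1 < n)%N -> ordS i != i.
Proof. by move=> n1; rewrite -val_eqE ordSE /=; case: ifP => /eqP; lia. Qed.

Lemma ordSS_neq n (i : 'I_n) : (2 < n)%N -> ordS (ordS i) != i.
Proof.
move=> n2; have := ltn_ord i.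
by rewrite -val_eqE !ordSE /=; case: ifP => /eqP; case: ifP => /eqP; lia.
Qed.

Section Affine.
Variable R : realFieldType.
Local Notation pt := (pt R).

Definition lerp (A B : pt) (t : R) : pt :=
  ((1 - t) * A.1 + t * B.1, (1 - t) * A.2 + t * B.2).

Definition open_segment (A B : pt) : set pt :=
  [set X | exists2 t, 0 < t < 1 & X = lerp A B t].

Definition cross (A B C : pt) : R :=
  (B.1 - A.1) * (C.2 - A.2) - (B.2 - A.2) * (C.1 - A.1).

Definition comb3 (x y z : R) (A B C : pt) : pt :=
  (x * A.1 + y * B.1 + z * C.1, x * A.2 + y * B.2 + z * C.2).

Lemma lerp0 (A B : pt) : lerp A B 0 = A.
Proof. by case: A => a1 a2; rewrite /lerp /=; congr pair; ring. Qed.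

Lemma lerp1 (A B : pt) : lerp A B 1 = B.
Proof. by case: B => b1 b2; rewrite /lerp /=; congr pair; ring. Qed.

Lemma cross_lerp (A B : pt) (t1 t2 t3 : R) :
  cross (lerp A B t1) (lerp A B t2) (lerp A B t3) = 0.
Proof. by rewrite /cross /lerp /=; ring. Qed.

Lemma sqr_dist_neq0 (A B : pt) : A != B ->
  (B.1 - A.1) ^+ 2 + (B.2 - A.2) ^+ 2 != 0.
Proof.
apply: contra_neq => /eqP; rewrite paddr_eq0 ?sqr_ge0 // !sqrf_eq0 !subr_eq0.
by case: A B => [a1 a2] [b1 b2] /andP[/eqP/= <- /eqP/= <-].
Qed.

Lemma cross_eq0_lerp (A B X : pt) : A != B -> cross A B X = 0 ->
  exists t, X = lerp A B t.
Proof.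
move=> /sqr_dist_neq0; case: A B X => [a1 a2] [b1 b2] [x1 x2]; rewrite /cross /lerp /=.
set D := _ + _ => D0 ABX.
(* [N / D] is the coordinate of the orthogonal projection of X onto AB. *)
set N := (x1 - a1) * (b1 - a1) + (x2 - a2) * (b2 - a2).
have E1 : (x1 - a1) * D = N * (b1 - a1).
  by apply/subr0_eq; rewrite -(mulr0 (a2 - b2)) -ABX /D /N; ring.
have E2 : (x2 - a2) * D = N * (b2 - a2).
  by apply/subr0_eq; rewrite -(mulr0 (b1 - a1)) -ABX /D /N; ring.
exists (N / D); congr pair.
- by rewrite -[x1](subrK a1) -(mulfK D0 (x1 - a1)) E1; ring.
- by rewrite -[x2](subrK a2) -(mulfK D0 (x2 - a2)) E2; ring.
Qed.

Lemma cross_eq0_cross (A B X Y Z : pt) : A != B ->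
  cross A B X = 0 -> cross A B Y = 0 -> cross A B Z = 0 -> cross X Y Z = 0.
Proof.
move=> AB /(cross_eq0_lerp AB)[t1 ->] /(cross_eq0_lerp AB)[t2 ->].
by move=> /(cross_eq0_lerp AB)[t3 ->]; apply: cross_lerp.
Qed.

Lemma cross_comb3 (x y z : R) (A B C : pt) : x + y + z = 1 ->
  [/\ cross B C (comb3 x y z A B C) = x * cross A B C,
      cross C A (comb3 x y z A B C) = y * cross A B C &
      cross A B (comb3 x y z A B C) = z * cross A B C].
Proof.
by move=> /(canRL (addrK _))/(canRL (addrK _)) ->; split; rewrite /cross /comb3 /=; ring.
Qed.

Lemma cross_sum (A B C X : pt) :
  cross B C X + cross C A X + cross A B X = cross A B C.
Proof. by rewrite /cross; ring. Qed.

Lemma comb3_cross (A B C X : pt) : cross A B C != 0 ->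
  comb3 (cross B C X / cross A B C) (cross C A X / cross A B C)
        (cross A B X / cross A B C) A B C = X.
Proof. by case: X => x1 x2 D0; rewrite /comb3 /cross /=; congr pair; field. Qed.

End Affine.

Section Collinear.
Variable R : realType.
Local Notation pt := (pt R).

Lemma cross_eq0_collinear (A B X Y Z : pt) : A != B ->
  cross A B X = 0 -> cross A B Y = 0 -> cross A B Z = 0 -> collinear X Y Z.
Proof.
move=> AB eX eY eZ.
exists (A.2 - B.2), (B.1 - A.1), ((A.2 - B.2) * A.1 + (B.1 - A.1) * A.2).
have online P : cross A B P = 0 ->
    (A.2 - B.2) * P.1 + (B.1 - A.1) * P.2 = (A.2 - B.2) * A.1 + (B.1 - A.1) * A.2.
  by move=> eP; apply/subr0_eq; rewrite -eP /cross; ring.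
split; last by rewrite !online.
apply/orP; rewrite -negb_and; apply: contra AB.
case: A B {eX eY eZ online} => [a1 a2] [b1 b2].
by rewrite !subr_eq0 => /andP[/eqP/= -> /eqP/= ->].
Qed.

Lemma collinearP (A B C : pt) : collinear A B C <-> cross A B C = 0.
Proof.
split.
  case=> p [q [r [pq0 [eA [eB eC]]]]].
  have pD : p * cross A B C = 0.
    have -> : p * cross A B C = (C.2 - A.2) * (p * B.1 + q * B.2 - (p * A.1 + q * A.2))
                              - (B.2 - A.2) * (p * C.1 + q * C.2 - (p * A.1 + q * A.2)).
      by rewrite /cross; ring.
    by rewrite eA eB eC subrr !mulr0 subrr.
  have qD : q * cross A B C = 0.
    have -> : q * cross A B C = (B.1 - A.1) * (p * C.1 + q * C.2 - (p * A.1 + q * A.2))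
                              - (C.1 - A.1) * (p * B.1 + q * B.2 - (p * A.1 + q * A.2)).
      by rewrite /cross; ring.
    by rewrite eA eB eC subrr !mulr0 subrr.
  by case: pq0 => nz; [move: pD | move: qD] => /eqP; rewrite mulf_eq0 (negbTE nz) => /eqP.
move=> ABC; have [<-|AB] := eqVneq A B; last first.
  by apply: (cross_eq0_collinear AB) => //; rewrite /cross; ring.
have [<-|AC] := eqVneq A C; last first.
  by apply: (cross_eq0_collinear AC); rewrite /cross; ring.
exists 1, 0, A.1; split; first by left; exact: oner_neq0.
by rewrite mul1r mul0r addr0.
Qed.

Lemma collinear_open_segment (A B C : pt) : A != B -> A != C -> B != C ->
  collinear A B C -> [\/ open_segment A B C, open_segment A C B | open_segment B C A].
Proof.
move=> AB AC BC /collinearP /(cross_eq0_lerp AB)[t Ct].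
have t0 : t != 0 by apply: contraNneq AC => t0; rewrite Ct t0 lerp0.
have t1 : t != 1 by apply: contraNneq BC => t1; rewrite Ct t1 lerp1.
have inv01 (s : R) : 1 < s -> 0 < s^-1 < 1.
  by move=> s1; rewrite invr_gt0 invf_lt1 ?s1 ?andbT //; lra.
case: (ltgtP t 0) => [tlt0 | tgt0 | /eqP]; last by rewrite (negbTE t0).
  apply: Or33; exists (1 - t)^-1; first by apply: inv01; lra.
  have t1' : 1 - t != 0 by apply/eqP; lra.
  by rewrite Ct; case: A B {AB AC BC Ct} => a1 a2 [b1 b2]; rewrite /lerp /=; congr pair; field.
case: (ltgtP t 1) => [tlt1 | tgt1 | /eqP]; last by rewrite (negbTE t1).
  by apply: Or31; exists t; rewrite ?tgt0 ?tlt1.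
apply: Or32; exists t^-1; first exact: inv01.
by rewrite Ct; case: A B {AB AC BC Ct} => a1 a2 [b1 b2]; rewrite /lerp /=; congr pair; field.
Qed.

End Collinear.

Section ConvexHull.
Variable R : realType.
Local Notation pt := (pt R).

Lemma cross_continuous (A B : pt) : continuous (cross A B).
Proof.
move=> X; apply: cvgB; apply: cvgM; try exact: cvg_cst.
  by apply: cvgB; [exact: cvg_snd | exact: cvg_cst].
by apply: cvgB; [exact: cvg_fst | exact: cvg_cst].
Qed.

Variables (n : nat) (V : 'I_n -> pt).

Lemma conv_hull_comb3 a b c (x y z : R) :
  0 <= x -> 0 <= y -> 0 <= z -> x + y + z = 1 ->
  conv_hull V (comb3 x y z (V a) (V b) (V c)).
Proof.
move=> x0 y0 z0 xyz1.
pose l k : R := x * (k == a)%:R + y * (k == b)%:R + z * (k == c)%:R.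
have sum_l (g : 'I_n -> R) : \sum_k l k * g k = x * g a + y * g b + z * g c.
  have pick1 d : \sum_(k < n) (k == d)%:R * g k = g d.
    by rewrite (bigD1 d) //= eqxx mul1r big1 ?addr0 // => k /negbTE ->; rewrite mul0r.
  under eq_bigr do rewrite !mulrDl -!mulrA.
  by rewrite !big_split /= -!mulr_sumr !pick1.
exists l; split; first by move=> k; rewrite !addr_ge0 // mulr_ge0.
split; last by rewrite !sum_l.
under eq_bigr => k _ do rewrite -[l k]mulr1.
by rewrite (sum_l (fun=> 1)) !mulr1.
Qed.

Lemma interior_conv_hull_comb3 a b c (x y z : R) : cross (V a) (V b) (V c) != 0 ->
  0 < x -> 0 < y -> 0 < z -> x + y + z = 1 ->
  interior (conv_hull V) (comb3 x y z (V a) (V b) (V c)).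
Proof.
move=> D0 x0 y0 z0 xyz1.
set D := cross _ _ _ in D0 *; set X := comb3 _ _ _ _ _ _.
have [eA eB eC] := cross_comb3 (V a) (V b) (V c) xyz1.
have near_gt0 (P Q : pt) w : cross P Q X = w * D -> 0 < w ->
    \forall u \near X, 0 < cross P Q u / D.
  move=> eX w0; apply: (cvgr_gt _ (cvgM (@cross_continuous P Q X) (cvg_cst D^-1))).
  by rewrite eX mulfK.
have nA := near_gt0 _ _ _ eA x0; have nB := near_gt0 _ _ _ eB y0.
have nC := near_gt0 _ _ _ eC z0.
near=> u; rewrite -(comb3_cross u D0); apply: conv_hull_comb3.
- by apply: ltW; near: u.
- by apply: ltW; near: u.
- by apply: ltW; near: u.
- by rewrite -!mulrDl cross_sum divff.
Unshelve. all: by end_near.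
Qed.

Lemma convex_locally_strict_notin_open_segment a b m :
  is_convex V -> locally_strict V -> V a != V b -> ~ open_segment (V a) (V b) (V m).
Proof.
move=> convV lsV ab [s /andP[s0 s1] Vm].
have on_ab : cross (V a) (V b) (V m) = 0 by rewrite Vm /cross /lerp /=; ring.
have [c adj off] : exists2 c, ordS m = c \/ ordS c = m & cross (V a) (V b) (V c) != 0.
  have [S0|] := eqVneq (cross (V a) (V b) (V (ordS m))) 0; last by exists (ordS m); [left|].
  have [P0|] := eqVneq (cross (V a) (V b) (V (ord_pred m))) 0.
    by case: (lsV m); apply/collinearP/(cross_eq0_cross ab).
  by exists (ord_pred m); [right; rewrite ord_predK|].
pose X := comb3 ((1 - s) / 2) (s / 2) (1 / 2) (V a) (V b) (V c).
have intX : interior (conv_hull V) X by apply: interior_conv_hull_comb3 => //; lra.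
have : boundary (conv_hull V) X.
  rewrite -convV; case: adj => [mc | cm]; [exists m | exists c] => //.
    by exists (1 / 2); split; [lra | rewrite mc /X Vm /comb3 /lerp /=; congr pair; field].
  by exists (1 / 2); split; [lra | rewrite cm /X Vm /comb3 /lerp /=; congr pair; field].
by case.
Qed.

End ConvexHull.

Section Polygon.
Variables (R : realType) (n : nat) (V : 'I_n -> pt R).

Lemma strict_quasi_strict : (1 < n)%N -> strict V -> quasi_strict V.
Proof. by move=> n1 sV i j ji jSi; apply: sV; rewrite 1?eq_sym ?ordS_neq. Qed.

Lemma quasi_strict_ordinary : (2 < n)%N -> quasi_strict V -> ordinary V.
Proof.
move=> n2 qsV i j ij; apply/eqP => Vij.
have n1 : (1 < n)%N by apply: ltnW.
have [jSi|jSi] := eqVneq j (ordS i).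
  apply: (qsV i (ordS (ordS i))); rewrite ?ordSS_neq ?ordS_neq //.
  by apply/collinearP; rewrite -jSi -Vij /cross; ring.
apply: (qsV i j) => //; first by rewrite eq_sym.
by apply/collinearP; rewrite -Vij /cross; ring.
Qed.

Lemma quasi_strict_locally_strict : (2 < n)%N -> quasi_strict V -> locally_strict V.
Proof.
move=> n2 qsV i; have := qsV (ord_pred i) (ordS i); rewrite ord_predK; apply.
  by rewrite -{1}(ord_predK i) ordSS_neq.
by rewrite ordS_neq //; apply: ltnW.
Qed.

Lemma ordinary_locally_strict_convex_strict :
  ordinary V -> locally_strict V -> is_convex V -> strict V.
Proof.
move=> ordV lsV convV i j k ij jk ik.
move=> /(collinear_open_segment (ordV _ _ ij) (ordV _ _ ik) (ordV _ _ jk)).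
by case; apply: convex_locally_strict_notin_open_segment; rewrite ?ordV.
Qed.

End Polygon.

Theorem proposition1p14 (R : realType) (n : nat) (V : 'I_n -> pt R) :
  (3 <= n)%N ->
  ((ordinary V /\ locally_strict V /\ is_convex V) <->
     (quasi_strict V /\ is_convex V)) /\
  ((quasi_strict V /\ is_convex V) <-> (strict V /\ is_convex V)).
Proof.
move=> n2; have n1 : (1 < n)%N by apply: ltnW.
have qs_strict : quasi_strict V -> is_convex V -> strict V.
  move=> qsV; apply: ordinary_locally_strict_convex_strict.
  - exact: quasi_strict_ordinary.
  - exact: quasi_strict_locally_strict.
split; split.
- case=> ordV [lsV convV]; split=> //.
  exact/strict_quasi_strict/ordinary_locally_strict_convex_strict.
- by case=> qsV convV; split; [|split]; [exact: quasi_strict_ordinary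
                                        | exact: quasi_strict_locally_strict |].
- by case=> qsV convV; split; [exact: qs_strict|].
- by case=> sV convV; split; [exact: strict_quasi_strict|].
Qed.
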